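(* Let $(H,\circ,N,\star,\boxdot)$ be a right bracoid, i.e. a right skew bracoid in which $(N,\star)$ is abelian. Then for every $h\in H$ the map $\beta(h):N\to N$, $\eta^{\beta(h)}=\overline{\eta}\star(\eta\boxdot h)\star\overline{(e_N\boxdot h)}$, is an endomorphism of the group $(N,\star)$.
   Context: For a group $(N,\star)$, $e_N$ denotes its identity and $\overline{\eta}$ the inverse of $\eta$. A right skew bracoid is a 5-tuple $(H,\circ,N,\star,\boxdot)$ where $(H,\circ)$ and $(N,\star)$ are groups and $\boxdot$ is a transitive right action of $(H,\circ)$ on the set $N$ such that $(\eta\star\mu)\boxdot h=(\eta\boxdot h)\star\overline{(e_N\boxdot h)}\star(\mu\boxdot h)$ for all $h\in H$, $\eta,\mu\in N$. *)

(* The abelian group (N, star) is modelled as a zmodType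
   (star = +, e_N = 0, inverse = -); the possibly non-abelian, possibly
   infinite group (H, o) is given by an explicit carrier with operations. *)
From HB Require Import structures.
From mathcomp Require Import all_boot all_algebra.
Set Implicit Arguments. Unset Strict Implicit. Unset Printing Implicit Defensive.
Import GRing.Theory.
Local Open Scope ring_scope.

Definition is_group (H : Type) (mul : H -> H -> H) (one : H) (inv : H -> H) : Prop :=
  (forall a b c, mul a (mul b c) = mul (mul a b) c) /\
  (forall a, mul one a = a) /\ (forall a, mul a one = a) /\
  (forall a, mul (inv a) a = one) /\ (forall a, mul a (inv a) = one).

Definition is_right_action (H N : Type) (mul : H -> H -> H) (one : H)
    (act : N -> H -> N) : Prop :=
  (forall x, act x one = x) /\
  (forall x g h, act x (mul g h) = act (act x g) h).

Definition is_transitive (H N : Type) (act : N -> H -> N) : Prop :=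
  forall x y : N, exists h : H, act x h = y.

Definition is_right_bracoid (H : Type) (mul : H -> H -> H) (one : H) (inv : H -> H)
    (N : zmodType) (act : N -> H -> N) : Prop :=
  [/\ is_group mul one inv,
      is_right_action mul one act,
      is_transitive act &
      forall (h : H) (eta mu : N),
        act (eta + mu) h = act eta h - act 0 h + act mu h].

Definition beta (H : Type) (N : zmodType) (act : N -> H -> N) (h : H) (eta : N) : N :=
  - eta + act eta h - act 0 h.

From mathcomp Require Import all_boot all_algebra.
Local Open Scope ring_scope.
Import GRing.Theory.

(* The bracoid axiom says that eta |-> eta [.] h is affine, i.e. its linear
   part eta |-> eta [.] h - e_N [.] h is additive; in an abelian group,
   beta(h) is that linear part minus the identity, hence additive too. *)

Lemma affine_sub_id_morph_add (N : zmodType) (f : N -> N) :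
  (forall x y, f (x + y) = f x - f 0 + f y) ->
  {morph (fun x => - x + f x - f 0) : x y / x + y}.
Proof. by move=> fD x y /=; rewrite fD opprD addrACA -!addrA; congr (_ + _). Qed.

Theorem corollary2p9 (H : Type) (mul : H -> H -> H) (one : H) (inv : H -> H)
    (N : zmodType) (act : N -> H -> N) :
  is_right_bracoid mul one inv act ->
  forall h : H, {morph beta act h : x y / x + y}.
Proof.
move=> [_ _ _ actD] h.
exact: (@affine_sub_id_morph_add N (act^~ h) (actD h)).
Qed.
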